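(* There exists $\delta_0>0$ such that for every $0\le \delta<\delta_0$ the following holds: there exists $\varepsilon=\varepsilon(\delta)>0$ such that for every Boolean function $f:\{0,1\}^n\to\{0,1\}$ (any $n$) there exists a $\delta$-noisy circuit $C$ composed of 3MIN gates with $n$ inputs such that for all $(x_1,\dots,x_n)\in\{0,1\}^n$, $\mathbb{P}(C(x_1,\dots,x_n)\neq f(x_1,\dots,x_n))\le\frac12-\varepsilon$. That is, provided $\delta$ is sufficiently small, any Boolean function can be reliably computed by a $\delta$-noisy circuit composed of 3-input minority gates.
   Context: A Boolean circuit is a directed acyclic graph whose source nodes are either input variables $x_1,\dots,x_n$ or constants $0$ or $1$ (constants are noiseless), whose other vertices are logic gates computing a Boolean function of their incoming edges and sending the result along all outgoing edges, and which has a single sink, the output. A 3MIN (3-input minority) gate outputs $1$ if at most one of its three inputs equals $1$, and $0$ otherwise (the negation of majority). A gate is $\delta$-noisy if, given its inputs, it outputs the wrong value with probability $\delta$; a $\delta$-noisy circuit has all gates $\delta$-noisy, malfunctioning independently. *)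

From HB Require Import structures.
From mathcomp Require Import all_boot all_order all_algebra.
From mathcomp Require Import reals.
Set Implicit Arguments. Unset Strict Implicit. Unset Printing Implicit Defensive.
Import Order.TTheory GRing.Theory Num.Theory.
Local Open Scope ring_scope.

(* A wire feeding a gate: an input variable x_i (i < n), a noiseless
   constant, or the output of an earlier gate (index in topological order). *)
Inductive wire (n : nat) : Type :=
  | WIn of 'I_n
  | WConst of bool
  | WGate of nat.

(* A 3MIN circuit with n inputs: a list of gates in topological order,
   each given by its three input wires.  The output is the last gate. *)
Definition circuit (n : nat) := seq (wire n * wire n * wire n).

Definition min3 (a b c : bool) : bool := (a + b + c <= 1)%N.

Definition wire_ok n (k : nat) (w : wire n) : bool :=
  match w with WGate j => (j < k)%N | _ => true end.

Fixpoint wf_from n (k : nat) (gs : circuit n) : bool :=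
  match gs with
  | [::] => true
  | (a, b, c) :: gs' =>
      [&& wire_ok k a, wire_ok k b, wire_ok k c & wf_from k.+1 gs']
  end.

Definition circuit_wf n (C : circuit n) : bool := (0 < size C)%N && wf_from 0 C.

Definition wire_val n (x : n.-tuple bool) (vals : seq bool) (w : wire n) : bool :=
  match w with
  | WIn i => tnth x i
  | WConst b => b
  | WGate j => nth false vals j
  end.

(* Run the circuit on input x with fault pattern z (z k = true means gate k
   outputs the wrong value); returns the values of all gates. *)
Fixpoint run n (x : n.-tuple bool) (z : nat -> bool) (gs : circuit n)
  (vals : seq bool) : seq bool :=
  match gs with
  | [::] => vals
  | (a, b, c) :: gs' =>
      run x z gs'
        (rcons vals
           (min3 (wire_val x vals a) (wire_val x vals b) (wire_val x vals c)
              (+) z (size vals)))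
  end.

Definition output n (C : circuit n) (x : n.-tuple bool) (z : nat -> bool) : bool :=
  last false (run x z C [::]).

Definition err_prob (R : realType) (delta : R) n (C : circuit n)
  (f : n.-tuple bool -> bool) (x : n.-tuple bool) : R :=
  \sum_(z : (size C).-tuple bool)
     (\prod_(i < size C) (if tnth z i then delta else 1 - delta)) *
     (output C x (fun k => nth false z k) != f x)%:R.

From HB Require Import structures.
From mathcomp Require Import all_boot all_order all_algebra.
From mathcomp Require Import reals.
From mathcomp Require Import zify ring lra.
Set Implicit Arguments. Unset Strict Implicit. Unset Printing Implicit Defensive.
Import Order.TTheory GRing.Theory Num.Theory.

(* Von Neumann's construction.  A 3MIN gate fed with (a, b, 0) computes
   NAND(a, b), and a gate fed with three copies of one value negates it while
   tolerating one wrong copy.  In a formula the subformulas use disjoint gates,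
   so their errors are independent: a gate errs with probability at most
   delta + p_a + p_b + p_c, and at most delta + 3 p^2 when its inputs are three
   copies of a subformula erring with probability p.  Hence a NAND followed by
   two rounds of triplication keeps the error probability below 1/100 when
   delta <= 1/1000, and since NAND is complete every Boolean function has a
   formula erring with probability at most 1/100 <= 1/2 - 1/4 on every input. *)

Inductive formula (n : nat) : Type :=
  | FVar of 'I_n
  | FConst of bool
  | FMin of formula n & formula n & formula n.

Fixpoint gates n (t : formula n) : nat :=
  if t is FMin a b c then gates a + (gates b + (gates c + 1)) else 0.

(* Gates are numbered in post-order (those of a, then of b, then of c, then
   the root), and gate k is faulty iff z k. *)
Fixpoint feval n (t : formula n) (x : n.-tuple bool) (z : nat -> bool) : bool :=
  match t with
  | FVar i => tnth x i
  | FConst b => b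
  | FMin a b c =>
      min3 (feval a x z) (feval b x (fun k => z (gates a + k)))
           (feval c x (fun k => z (gates a + (gates b + k))))
      (+) z (gates a + (gates b + gates c))
  end.

Lemma gates_FMin_gt0 n (a b c : formula n) : (0 < gates (FMin a b c))%N.
Proof. by rewrite /= addn1 !addnS. Qed.

Definition fideal n (t : formula n) x := feval t x (fun _ => false).

Lemma eq_feval n (t : formula n) x z z' :
  {in gtn (gates t), z =1 z'} -> feval t x z = feval t x z'.
Proof.
elim: t z z' => //= a IHa b IHb c IHc z z' zz'.
rewrite (IHa z z'); last by move=> k /[!inE] lt_k; apply: zz'; rewrite inE; lia.
rewrite (IHb _ (fun k => z' (gates a + k))); last first.
  by move=> k /[!inE] lt_k; apply: zz'; rewrite inE; lia.
rewrite (IHc _ (fun k => z' (gates a + (gates b + k)))); last first.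
  by move=> k /[!inE] lt_k; apply: zz'; rewrite inE; lia.
by rewrite zz' // inE; lia.
Qed.

Section Compilation.
Variable n : nat.
Implicit Types (t : formula n) (C : circuit n) (w : wire n).

(* [compile t off] lists the gates of [t], the first one having index [off],
   and returns the wire carrying the output of [t]. *)
Fixpoint compile t (off : nat) : circuit n * wire n :=
  match t with
  | FVar i => ([::], WIn i)
  | FConst b => ([::], WConst n b)
  | FMin a b c =>
    ((compile a off).1 ++ (compile b (off + gates a)).1 ++
       (compile c (off + gates a + gates b)).1 ++
       [:: ((compile a off).2, (compile b (off + gates a)).2,
            (compile c (off + gates a + gates b)).2)],
     WGate n (off + gates a + gates b + gates c))
  end.

Lemma size_compile t off : size (compile t off).1 = gates t.
Proof.
by elim: t off => //= a IHa b IHb c IHc off; rewrite !size_cat IHa IHb IHc.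
Qed.

Lemma wf_from_cat k C1 C2 :
  wf_from k (C1 ++ C2) = wf_from k C1 && wf_from (k + size C1) C2.
Proof.
elim: C1 k => [|[[a b] c] C1 IH] k /=; first by rewrite addn0.
by rewrite IH addSnnS !andbA.
Qed.

Lemma wire_ok_le k k' w : (k <= k')%N -> wire_ok k w -> wire_ok k' w.
Proof. by case: w => //= j; lia. Qed.

Lemma wf_compile t off :
  wf_from off (compile t off).1 && wire_ok (off + gates t) (compile t off).2.
Proof.
elim: t off => //= a IHa b IHb c IHc off.
move: (IHa off) (IHb (off + gates a)) (IHc (off + gates a + gates b)).
rewrite !wf_from_cat !size_compile /= => /andP[-> wa] /andP[-> wb] /andP[-> wc].
rewrite !addnA !andbT /= addn1 ltnSn andbT wc andbT.
by apply/andP; split; [apply: wire_ok_le wa | apply: wire_ok_le wb]; lia.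
Qed.

Lemma circuit_wf_compile t : (0 < gates t)%N -> circuit_wf (compile t 0).1.
Proof.
by move=> t_gt0; rewrite /circuit_wf size_compile t_gt0; case/andP: (wf_compile t 0).
Qed.

Lemma run_cat x z C1 C2 vals :
  run x z (C1 ++ C2) vals = run x z C2 (run x z C1 vals).
Proof. by elim: C1 vals => [|[[a b] c] C1 IH] vals //=. Qed.

Lemma wire_val_cat x vals vals' w :
  wire_ok (size vals) w -> wire_val x (vals ++ vals') w = wire_val x vals w.
Proof. by case: w => //= j lt_j; rewrite nth_cat lt_j. Qed.

Lemma run_compile x z t off vals : size vals = off ->
  exists2 L, run x z (compile t off).1 vals = vals ++ L &
    size L = gates t /\
    wire_val x (vals ++ L) (compile t off).2 = feval t x (fun k => z (off + k)).
Proof.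
elim: t off vals => [i|b|a IHa b IHb c IHc] off vals sz_vals;
  try by exists [::]; rewrite ?cats0.
have /andP[_ wa] := wf_compile a off.
have /andP[_ wb] := wf_compile b (off + gates a).
have /andP[_ wc] := wf_compile c (off + gates a + gates b).
have [La runA [szA valA]] := IHa off vals sz_vals.
have szA' : size (vals ++ La) = off + gates a by rewrite size_cat sz_vals szA.
have [Lb runB [szB valB]] := IHb _ _ szA'.
have szB' : size ((vals ++ La) ++ Lb) = off + gates a + gates b.
  by rewrite size_cat szA' szB.
have [Lc runC [szC valC]] := IHc _ _ szB'.
have szC' : size (((vals ++ La) ++ Lb) ++ Lc) = off + gates a + gates b + gates c.
  by rewrite size_cat szB' szC.
rewrite /= !run_cat runA runB runC /=.
set out := _ (+) _.
exists (La ++ Lb ++ Lc ++ [:: out]); first by rewrite -cats1 !catA.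
split; first by rewrite !size_cat szA szB szC.
rewrite !catA cats1 nth_rcons szC' ltnn eqxx /out szC' valC.
rewrite (wire_val_cat _ _ (wire_ok_le _ wb)) ?szB' // valB.
rewrite -catA (wire_val_cat _ _ (wire_ok_le _ wa)) ?szA' // valA !addnA.
congr (min3 _ _ _ (+) _).
- by apply: eq_feval => k; rewrite addnA.
- by apply: eq_feval => k; rewrite !addnA.
Qed.

Lemma output_compile x z t : (0 < gates t)%N ->
  output (compile t 0).1 x z = feval t x z.
Proof.
case: t => // a b c _.
have [L runL [szL valL]] := run_compile x z (FMin a b c) (erefl : size [::] = 0%N).
have -> : feval (FMin a b c) x z = feval (FMin a b c) x (fun k => z (0 + k)) by [].
rewrite /output runL cat0s -nth_last szL -valL /=.
by congr (nth false L _); rewrite add0n !addnA addn1.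
Qed.

End Compilation.

Local Open Scope ring_scope.

Section BernoulliExpectation.
Variables (R : numDomainType) (d : R).
Implicit Types (F G : seq bool -> R).

Fixpoint expect_bits (m : nat) F : R :=
  if m is m'.+1 then
    (1 - d) * expect_bits m' (fun l => F (false :: l)) +
    d * expect_bits m' (fun l => F (true :: l))
  else F [::].

Lemma eq_expect_bits m F G : F =1 G -> expect_bits m F = expect_bits m G.
Proof.
elim: m F G => [|m IH] F G eqFG /=; first exact: eqFG.
by congr (_ * _ + _ * _); apply: IH => l.
Qed.

Lemma expect_bitsD m F G :
  expect_bits m (fun l => F l + G l) = expect_bits m F + expect_bits m G.
Proof.
elim: m F G => [|m IH] F G //=.
rewrite (IH (fun l => F (false :: l))) (IH (fun l => F (true :: l))); ring.
Qed.

Lemma expect_bitsZ m c F :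
  expect_bits m (fun l => c * F l) = c * expect_bits m F.
Proof.
elim: m F => [|m IH] F //=.
rewrite (IH (fun l => F (false :: l))) (IH (fun l => F (true :: l))); ring.
Qed.

Lemma expect_bits_cst m c : expect_bits m (fun _ => c) = c.
Proof. by elim: m => [|m IH] //=; rewrite IH; ring. Qed.

Lemma ler_expect_bits m F G : 0 <= d -> d <= 1 ->
  (forall l, F l <= G l) -> expect_bits m F <= expect_bits m G.
Proof.
move=> d_ge0 d_le1; elim: m F G => [|m IH] F G leFG /=; first exact: leFG.
by rewrite lerD // ler_wpM2l ?subr_ge0 //; apply: IH.
Qed.

Definition tensor m F G (l : seq bool) := F (take m l) * G (drop m l).

Lemma expect_bits_tensor m1 m2 F G :
  expect_bits (m1 + m2) (tensor m1 F G) = expect_bits m1 F * expect_bits m2 G.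
Proof.
elim: m1 F => [|m1 IH] F /=.
  rewrite add0n -expect_bitsZ; apply: eq_expect_bits => l.
  by rewrite /tensor take0 drop0.
by rewrite [RHS]mulrDl -!mulrA -!IH.
Qed.

Lemma expect_bits_tuple m F :
  \sum_(z : m.-tuple bool) (\prod_(i < m) (if tnth z i then d else 1 - d)) * F z =
  expect_bits m F.
Proof.
elim: m F => [|m IH] F.
  rewrite (big_pred1 [tuple]) => [|t]; last by rewrite [t]tuple0 /= eqxx.
  by rewrite big_ord0 mul1r.
rewrite (reindex (fun p : bool * m.-tuple bool => [tuple of p.1 :: p.2])) /=; last first.
  exists (fun t : m.+1.-tuple bool => (thead t, [tuple of behead t])).
    by move=> [b t] _; rewrite theadE; congr pair; apply: val_inj.
  by move=> t _; rewrite [in RHS](tuple_eta t).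
rewrite -(pair_bigA _ (fun b (t : m.-tuple bool) =>
  (\prod_(i < m.+1) (if tnth [tuple of b :: t] i then d else 1 - d)) * F (b :: t))).
have sum_cons b : \sum_(t : m.-tuple bool)
    (\prod_(i < m.+1) (if tnth [tuple of b :: t] i then d else 1 - d)) * F (b :: t) =
    (if b then d else 1 - d) * expect_bits m (fun l => F (b :: l)).
  rewrite -IH big_distrr; apply: eq_bigr => t _.
  rewrite big_ord_recl tnth0 -mulrA; congr (_ * (_ * _)).
  by apply: eq_bigr => i _; rewrite tnthS.
by rewrite big_bool /= !sum_cons addrC.
Qed.

End BernoulliExpectation.

Definition ferr n (t : formula n) x (l : seq bool) :=
  feval t x (nth false l) != fideal t x.

Lemma ferr_min n (a b c : formula n) x l :
  ferr (FMin a b c) x l =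
  ((min3 (fideal a x (+) ferr a x (take (gates a) l))
        (fideal b x (+) ferr b x (take (gates b) (drop (gates a) l)))
        (fideal c x (+) ferr c x (take (gates c) (drop (gates b) (drop (gates a) l))))
   (+) nth false (drop (gates c) (drop (gates b) (drop (gates a) l))) 0)
  != min3 (fideal a x) (fideal b x) (fideal c x)).
Proof.
have addb_neq u v : u (+) (v != u) = v by case: u; case: v.
rewrite /ferr !addb_neq /fideal /= addbF !nth_drop addn0.
congr (min3 _ _ _ (+) _ != _); apply: eq_feval => k /[!inE] lt_k.
- by rewrite nth_take.
- by rewrite nth_take // nth_drop.
- by rewrite nth_take // !nth_drop addnA.
Qed.

Lemma min3_flip_le (ia ib ic ea eb ec e : bool) :
  ((min3 (ia (+) ea) (ib (+) eb) (ic (+) ec) (+) e != min3 ia ib ic)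
    <= e + ea + eb + ec)%N.
Proof. by move: ia ib ic ea eb ec e; do 7!case. Qed.

Lemma min3_flip_same_le (v ea eb ec e : bool) :
  ((min3 (v (+) ea) (v (+) eb) (v (+) ec) (+) e != min3 v v v)
    <= e + ea * eb + ea * ec + eb * ec)%N.
Proof. by move: v ea eb ec e; do 5!case. Qed.

Definition neg3 n (t : formula n) := FMin t t t.

Definition nand3 n (s t : formula n) := neg3 (neg3 (FMin s t (FConst n false))).

Lemma fideal_neg3 n (t : formula n) x : fideal (neg3 t) x = ~~ fideal t x.
Proof. by rewrite /fideal /=; case: feval. Qed.

Lemma fideal_nand3 n (s t : formula n) x :
  fideal (nand3 s t) x = ~~ (fideal s x && fideal t x).
Proof. by rewrite !fideal_neg3 negbK /fideal /=; case: feval; case: feval. Qed.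

Section ErrorProbability.
Variables (R : numDomainType) (d : R) (n : nat).
Hypotheses (d_ge0 : 0 <= d) (d_le1 : d <= 1).
Implicit Types (t : formula n) (x : n.-tuple bool).

Definition ferr_prob t x := expect_bits d (gates t) (fun l => (ferr t x l)%:R).

Lemma ferr_prob_ge0 t x : 0 <= ferr_prob t x.
Proof.
by rewrite -(expect_bits_cst d (gates t) 0); apply: ler_expect_bits => // l.
Qed.

Lemma ferr_prob_gates0 t x : gates t = 0%N -> ferr_prob t x = 0.
Proof.
case: t => [i|b|a b c] gates0; last by have := gates_FMin_gt0 a b c; rewrite gates0.
all: by rewrite /ferr_prob /ferr /fideal /= eqxx.
Qed.

Let fault : seq bool -> R := fun l => (nth false l 0)%:R.
Let ind t x : seq bool -> R := fun l => (ferr t x l)%:R.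

Lemma expect_bits_fault : expect_bits d 1 fault = d.
Proof. by rewrite /fault /=; ring. Qed.

Lemma ferr_prob_min_le a b c x :
  ferr_prob (FMin a b c) x <= d + ferr_prob a x + ferr_prob b x + ferr_prob c x.
Proof.
set ga := gates a; set gb := gates b; set gc := gates c.
have -> : d + ferr_prob a x + ferr_prob b x + ferr_prob c x =
  expect_bits d (gates (FMin a b c)) (fun l =>
    tensor ga (fun=> 1) (tensor gb (fun=> 1) (tensor gc (fun=> 1) fault)) l +
    tensor ga (ind a x) (tensor gb (fun=> 1) (tensor gc (fun=> 1) (fun=> 1))) l +
    tensor ga (fun=> 1) (tensor gb (ind b x) (tensor gc (fun=> 1) (fun=> 1))) l +
    tensor ga (fun=> 1) (tensor gb (fun=> 1) (tensor gc (ind c x) (fun=> 1))) l).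
  rewrite /= !expect_bitsD !expect_bits_tensor !expect_bits_cst expect_bits_fault.
  by rewrite /ferr_prob; ring.
apply: ler_expect_bits => // l.
rewrite /tensor /fault /ind ferr_min !mul1r !mulr1 -!natrD ler_nat.
exact: min3_flip_le.
Qed.

Lemma ferr_prob_min_same_le a b c x :
  fideal b x = fideal a x -> fideal c x = fideal a x ->
  ferr_prob (FMin a b c) x <=
    d + ferr_prob a x * ferr_prob b x + ferr_prob a x * ferr_prob c x +
    ferr_prob b x * ferr_prob c x.
Proof.
move=> ba ca; set ga := gates a; set gb := gates b; set gc := gates c.
have -> : d + ferr_prob a x * ferr_prob b x + ferr_prob a x * ferr_prob c x +
    ferr_prob b x * ferr_prob c x =
  expect_bits d (gates (FMin a b c)) (fun l =>
    tensor ga (fun=> 1) (tensor gb (fun=> 1) (tensor gc (fun=> 1) fault)) l +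
    tensor ga (ind a x) (tensor gb (ind b x) (tensor gc (fun=> 1) (fun=> 1))) l +
    tensor ga (ind a x) (tensor gb (fun=> 1) (tensor gc (ind c x) (fun=> 1))) l +
    tensor ga (fun=> 1) (tensor gb (ind b x) (tensor gc (ind c x) (fun=> 1))) l).
  rewrite /= !expect_bitsD !expect_bits_tensor !expect_bits_cst expect_bits_fault.
  by rewrite /ferr_prob; ring.
apply: ler_expect_bits => // l.
rewrite /tensor /fault /ind ferr_min ba ca !mul1r !mulr1 -!natrM -!natrD ler_nat.
exact: min3_flip_same_le.
Qed.

Lemma ferr_prob_neg3 t x :
  ferr_prob (neg3 t) x <= d + 3 * ferr_prob t x ^+ 2.
Proof.
have -> : d + 3 * ferr_prob t x ^+ 2 = d + ferr_prob t x * ferr_prob t x +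
    ferr_prob t x * ferr_prob t x + ferr_prob t x * ferr_prob t x by ring.
exact: ferr_prob_min_same_le.
Qed.

End ErrorProbability.

Lemma ferr_prob_nand3 (R : realFieldType) (d : R) n (s t : formula n) x :
  0 <= d -> d <= 1 / 1000 ->
  ferr_prob d s x <= 1 / 100 -> ferr_prob d t x <= 1 / 100 ->
  ferr_prob d (nand3 s t) x <= 1 / 100.
Proof.
move=> d_ge0 d_le s_le t_le; have d_le1 : d <= 1 by lra.
have u_le : ferr_prob d (FMin s t (FConst n false)) x <= 21 / 1000.
  have := ferr_prob_min_le d_ge0 d_le1 s t (FConst n false) x.
  by rewrite [ferr_prob d (FConst n false) x]ferr_prob_gates0 //; lra.
have nu_le : ferr_prob d (neg3 (FMin s t (FConst n false))) x <= 3 / 1000.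
  have := ferr_prob_neg3 d_ge0 d_le1 (FMin s t (FConst n false)) x.
  have := ferr_prob_ge0 d_ge0 d_le1 (FMin s t (FConst n false)) x; nra.
have := ferr_prob_neg3 d_ge0 d_le1 (neg3 (FMin s t (FConst n false))) x.
have := ferr_prob_ge0 d_ge0 d_le1 (neg3 (FMin s t (FConst n false))) x; nra.
Qed.

Section NandCompleteness.
Variables (n : nat) (P : (n.-tuple bool -> bool) -> Prop).
Hypotheses (P_ext : forall g h, g =1 h -> P g -> P h)
  (P_var : forall i, P (fun x => tnth x i)) (P_const : forall b, P (fun=> b))
  (P_nand : forall g h, P g -> P h -> P (fun x => ~~ (g x && h x))).

Lemma nand_closed_neg g : P g -> P (fun x => ~~ g x).
Proof. by move=> Pg; apply: P_ext (P_nand Pg Pg) => x; rewrite andbb. Qed.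

Lemma nand_closed_and g h : P g -> P h -> P (fun x => g x && h x).
Proof.
by move=> Pg Ph; apply: P_ext (nand_closed_neg (P_nand Pg Ph)) => x; rewrite negbK.
Qed.

Lemma nand_closed_or g h : P g -> P h -> P (fun x => g x || h x).
Proof.
move=> Pg Ph; apply: P_ext (P_nand (nand_closed_neg Pg) (nand_closed_neg Ph)) => x.
by rewrite -negb_or negbK.
Qed.

Lemma nand_closed_eq a : P (fun x => x == a).
Proof.
have P_lit i : P (fun x => tnth x i == tnth a i).
  case: (tnth a i); first by apply: P_ext (P_var i) => x; rewrite eqb_id.
  by apply: P_ext (nand_closed_neg (P_var i)) => x; rewrite eqbF_neg.
have P_all (s : seq 'I_n) : P (fun x => all (fun i => tnth x i == tnth a i) s).
  by elim: s => [|i s IH] /=; [apply: P_const | apply: nand_closed_and].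
apply: P_ext (P_all (enum 'I_n)) => x; rewrite eqEtuple.
by apply/allP/forallP => eq_xa i; [apply: eq_xa; rewrite mem_enum | move=> _].
Qed.

Lemma nand_closed_all g : P g.
Proof.
have P_mem (s : seq (n.-tuple bool)) : P (fun x => x \in s).
  elim: s => [|a s IH]; first by apply: P_ext (P_const false) => x; rewrite in_nil.
  by apply: P_ext (nand_closed_or (nand_closed_eq a) IH) => x; rewrite in_cons.
apply: P_ext (P_mem [seq a <- enum {: n.-tuple bool} | g a]) => x.
by rewrite mem_filter mem_enum andbT.
Qed.

End NandCompleteness.

Definition reliable (R : realFieldType) (d : R) n (g : n.-tuple bool -> bool) :=
  exists t : formula n,
    (forall x, fideal t x = g x) /\ (forall x, ferr_prob d t x <= 1 / 100).

Lemma reliable_all (R : realFieldType) (d : R) n (g : n.-tuple bool -> bool) :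
  0 <= d -> d <= 1 / 1000 -> reliable d g.
Proof.
move=> d_ge0 d_le; apply: nand_closed_all => {g}.
- by move=> g h gh [t [tg t_err]]; exists t; split=> // x; rewrite -gh.
- move=> i; exists (FVar i); split=> // x; rewrite ferr_prob_gates0 //; lra.
- move=> b; exists (FConst n b); split=> // x; rewrite ferr_prob_gates0 //; lra.
move=> g h [s [sg s_err]] [t [th t_err]]; exists (nand3 s t); split=> x.
  by rewrite fideal_nand3 sg th.
exact: ferr_prob_nand3.
Qed.

Lemma err_prob_compile (R : realType) (d : R) n (t : formula n) f x :
  (0 < gates t)%N -> f x = fideal t x ->
  err_prob d (compile t 0).1 f x = ferr_prob d t x.
Proof.
move=> t_gt0 fx; rewrite /err_prob (expect_bits_tuple d _
  (fun l => (output (compile t 0).1 x (nth false l) != f x)%:R)) size_compile.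
by apply: eq_expect_bits => l; rewrite output_compile // fx.
Qed.

Theorem theorem3p2 (R : realType) :
  exists delta0 : R, 0 < delta0 /\
    forall delta : R, 0 <= delta -> delta < delta0 ->
      exists eps : R, 0 < eps /\
        forall (n : nat) (f : n.-tuple bool -> bool),
          exists C : circuit n, circuit_wf C /\
            forall x : n.-tuple bool, err_prob delta C f x <= 1 / 2 - eps.
Proof.
exists (1 / 1000); split=> [|d d_ge0 d_lt]; first lra.
have d_le : d <= 1 / 1000 by apply: ltW.
exists (1 / 4); split=> [|n f]; first lra.
have [t [t_f t_err]] := reliable_all (fun x => ~~ f x) d_ge0 d_le.
have f_nand x : f x = fideal (nand3 t t) x by rewrite fideal_nand3 t_f andbb negbK.
have nand_gt0 : (0 < gates (nand3 t t))%N := gates_FMin_gt0 _ _ _.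
exists (compile (nand3 t t) 0).1; split=> [|x]; first exact: circuit_wf_compile.
rewrite err_prob_compile //.
by apply: le_trans (ferr_prob_nand3 d_ge0 d_le (t_err x) (t_err x)) _; lra.
Qed.
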